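(* Assume Martin's Axiom MA together with the negation of the Continuum Hypothesis ($2^{\aleph_0}>\aleph_1$). Let $\mathfrak B$ be an atomless Boolean algebra with $|\mathfrak B|<2^{\aleph_0}$. Then the following are equivalent: (1) $\mathfrak B$ satisfies the countable chain condition (every family of pairwise disjoint nonzero elements of $\mathfrak B$ is countable); (2) there is a decomposition $\mathfrak B\setminus\{0\}=\bigcup_{n<\omega}\mathfrak B_n$ such that for each $n<\omega$: $\mathfrak B_n\subseteq\mathfrak B_{n+1}$; $\mathrm{int}(\mathfrak B_n)\ge 2^{-n}$; and for every $a\in\mathfrak B_n$ there are disjoint $b,c\in\mathfrak B_{n+1}$ with $b\vee c\le a$.
   Context: A Boolean algebra is atomless if it has no atom, i.e. no nonzero element $a$ whose only elements below it are $0$ and $a$. Elements $b,c$ are disjoint if $b\wedge c=0$. For a family $\mathcal F\subseteq\mathfrak B\setminus\{0\}$, the intersection number $\mathrm{int}(\mathcal F)$ is the supremum of all $\alpha\ge0$ such that for every finite sequence $a_1,\dots,a_m$ of elements of $\mathcal F$ (repetitions allowed) there is a set $I\subseteq\{1,\dots,m\}$ with $|I|\ge\alpha m$ and $\bigwedge_{i\in I}a_i\ne 0$. MA is Martin's Axiom: for every partial order $\mathbf P$ with no uncountable family of pairwise incompatible elements and every family of fewer than $2^{\aleph_0}$ dense subsets of $\mathbf P$, there is a filter on $\mathbf P$ meeting all of them. *)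

From HB Require Import structures.
From mathcomp Require Import all_boot all_order all_algebra.
Set Implicit Arguments. Unset Strict Implicit. Unset Printing Implicit Defensive.
Import Order.TTheory GRing.Theory Num.Theory.

Definition countable (A : Type) : Prop := exists f : A -> nat, injective f.

Definition lt_continuum (A : Type) : Prop :=
  (exists f : A -> (nat -> bool), injective f) /\
  ~ (exists g : (nat -> bool) -> A, injective g).

(* Negation of CH: there is a cardinal strictly between aleph_0 and 2^aleph_0,
   i.e. aleph_1 < 2^aleph_0. *)
Definition notCH : Prop :=
  exists X : Type, ~ countable X /\ lt_continuum X.

(** Martin's Axiom, for partial orders (P, le), with the convention that
    [le p q] means "p is stronger than (extends) q". *)
Section MAdefs.
Variables (P : Type) (le : P -> P -> Prop).

Definition is_partial_order : Prop :=
  (forall p, le p p) /\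
  (forall p q r, le p q -> le q r -> le p r) /\
  (forall p q, le p q -> le q p -> p = q).

Definition compatible (p q : P) : Prop := exists r, le r p /\ le r q.

Definition po_ccc : Prop :=
  forall A : P -> Prop,
    (forall p q, A p -> A q -> p <> q -> ~ compatible p q) ->
    countable {p : P | A p}.

Definition dense (D : P -> Prop) : Prop :=
  forall p, exists q, D q /\ le q p.

Definition is_filter (G : P -> Prop) : Prop :=
  (exists p, G p) /\
  (forall p q, G p -> le p q -> G q) /\
  (forall p q, G p -> G q -> exists r, G r /\ le r p /\ le r q).
End MAdefs.

Definition MA : Prop :=
  forall (P : Type) (le : P -> P -> Prop), inhabited P ->
    is_partial_order le -> po_ccc le ->
    forall (I : Type) (D : I -> P -> Prop),
      lt_continuum I -> (forall i, dense le (D i)) ->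
      exists G : P -> Prop, is_filter le G /\
        forall i, exists p, G p /\ D i p.

(** Boolean algebras are complemented distributive lattices with top and
    bottom ([ctbDistrLatticeType]). *)
Local Open Scope order_scope.

Definition is_atom d (B : ctbDistrLatticeType d) (a : B) : Prop :=
  a != \bot /\ forall b : B, b <= a -> b = \bot \/ b = a.

Definition atomless d (B : ctbDistrLatticeType d) : Prop :=
  forall a : B, ~ is_atom a.

Definition ba_ccc d (B : ctbDistrLatticeType d) : Prop :=
  forall A : B -> Prop,
    (forall x, A x -> x != \bot) ->
    (forall x y, A x -> A y -> x <> y -> x `&` y = \bot) ->
    countable {x : B | A x}.

Definition int_witness d (B : ctbDistrLatticeType d) (F : B -> Prop) (a : rat) : Prop :=
  (0 <= a)%R /\
  forall (m : nat) (s : 'I_m -> B), (0 < m)%N -> (forall i, F (s i)) ->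
    exists I : {set 'I_m},
      (a * m%:R <= (#|I|)%:R)%R /\ \meet_(i in I) s i != \bot.

(* int(F) >= a, i.e. the supremum of the witnesses is >= a *)
Definition int_ge d (B : ctbDistrLatticeType d) (F : B -> Prop) (a : rat) : Prop :=
  forall b : rat, (b < a)%R -> exists c : rat, (b < c)%R /\ int_witness F c.

From HB Require Import structures.
From mathcomp Require Import all_boot all_order all_algebra.
From mathcomp Require Import boolp classical_sets wochoice finmap zify.
Import Order.Theory GRing.Theory Num.Theory.
Set Implicit Arguments. Unset Strict Implicit. Unset Printing Implicit Defensive.
Local Open Scope order_scope.

(* Under MA + not CH every ccc poset has precaliber aleph_1: an uncountable
   family has an uncountable pairwise compatible subfamily (apply MA below a
   suitable condition, indexing the dense sets by an omega_1-like order of size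
   below the continuum). Hence products of ccc posets, in particular finite
   powers of B \ {0}, are ccc.

   (1) -> (2): force with finite labellings of nodes of binary trees by
   nonzero elements of B whose labels along every branch have nonzero meet.
   Conditions labelling the same nodes are compatible as soon as their branch
   meets are, so the forcing is ccc. As |B| < 2^aleph_0, MA gives a filter
   that labels every nonzero element and splits every labelled [a] by two
   disjoint labels below [a] at the children of its node. Let B_n be the
   labels at level <= n: among m of them, by pigeonhole m / 2^n lie on the
   branch to a common node of level n, so their meet is nonzero.

   (2) -> (1): int(B_n) > 2^-(n+1) bounds disjoint families in B_n by
   2^(n+1), so an antichain, a countable union of such families, is
   countable. *)

Lemma sval_inj (T : Type) (P : T -> Prop) (x y : {t | P t}) :
  sval x = sval y -> x = y.
Proof. by case: x => x hx; case: y => y hy /= E; apply: eq_exist. Qed.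

Lemma countable_inj (A C : Type) (f : A -> C) :
  injective f -> countable C -> countable A.
Proof. by move=> fi [g gi]; exists (g \o f) => x y /gi/fi. Qed.

Lemma countable_fibers (A M : Type) (f : A -> M) :
  countable M -> (forall m, countable {a | f a = m}) -> countable A.
Proof.
move=> [g gi] H.
pose e m := sval (cid (H m)).
have ei m : injective (e m) by rewrite /e; case: cid.
have K m1 m2 (E : m1 = m2) (x : {a | f a = m1}) (y : {a | f a = m2}) :
    e m1 x = e m2 y -> sval x = sval y.
  by case: m2 / E y => y /ei ->.
exists (fun a => choice.pickle (g (f a), e (f a) (exist _ a erefl))).
move=> a b /(pcan_inj (@choice.pickleK_inv _)) [] /gi E.
exact: (K _ _ E (exist _ a erefl) (exist _ b erefl)).
Qed.

Lemma uncountable_inhabited (A : Type) : ~ countable A -> inhabited A.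
Proof.
move=> nA; case: (pselect (inhabited A)) => // nI; exfalso; apply: nA.
by exists (fun _ => 0%N) => x; exfalso; apply: nI; constructor.
Qed.

Lemma countable_bounded_injections (S : Type) (K : nat) :
  (forall m (s : 'I_m -> S), injective s -> (m <= K)%N) -> countable S.
Proof.
move=> H.
pose P k := `[< exists l : seq {classic S}, uniq l /\ size l = k >].
have exP : exists k, P k by exists 0%N; apply/asboolP; exists [::].
have ubP k : P k -> (k <= K)%N.
  move=> /asboolP [[|x0 l] [ul <-]] //.
  apply: (H _ (fun i : 'I_(size (x0 :: l)) => nth x0 (x0 :: l) i)) => i j E.
  have : nth x0 (x0 :: l) i == nth x0 (x0 :: l) j :> {classic S} by apply/eqP.
  by rewrite nth_uniq // => /eqP /val_inj.
case: (ex_maxnP exP ubP) => k /asboolP [l [ul sl]] kmax.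
have all_in (x : {classic S}) : x \in l.
  apply: contraT => xl.
  have : P k.+1 by apply/asboolP; exists (x :: l); rewrite /= xl ul sl.
  by move/kmax; rewrite ltnn.
exists (fun x : S => index (x : {classic S}) l) => x y E.
rewrite -(nth_index (x : {classic S}) (all_in x)) E.
by rewrite (set_nth_default (y : {classic S})) ?index_mem ?nth_index.
Qed.

Definition Cantor := nat -> bool.

Lemma inj_of_surj (A C : Type) (F : A -> C) :
  (forall c, exists a, F a = c) -> exists g : C -> A, injective g.
Proof.
move=> H; exists (fun c => sval (cid (H c))) => x y.
by case: cid => a /= <-; case: cid => b /= <- ->.
Qed.

(* A diagonal argument: code [nat -> Cantor] inside [Cantor]; the [n]-th
   coordinates of the preimages of [(b, m)] with code [m] equal to [n] give a
   non-surjective map [B -> Cantor], and a sequence avoiding all of them has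
   no preimage. *)
Lemma no_inj_Cantor_prod (B M : Type) : countable M ->
  ~ (exists g : Cantor -> B, injective g) ->
  ~ (exists g : Cantor -> B * M, injective g).
Proof.
move=> [e ei] nB [g gi].
pose psi (s : nat -> Cantor) : Cantor := fun k =>
  if (choice.unpickle k : option (nat * nat)) is Some ij then s ij.1 ij.2 else false.
have psii : injective psi.
  move=> s t E; apply: funext => i; apply: funext => j.
  by have := congr1 (fun f => f (choice.pickle (i, j))) E; rewrite /psi choice.pickleK.
pose g' s := g (psi s).
have g'i : injective g' by move=> x y /gi /psii.
pose F (n : nat) (b : B) : Cantor :=
  match pselect (exists s m, g' s = (b, m) /\ e m = n) with
  | left h => sval (cid h) n | right _ => fun _ => false end.
have F_not_surj n : exists c, forall b, F n b <> c.
  apply: contrapT => H; apply: nB; apply: (@inj_of_surj _ _ (F n)) => c.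
  by apply: contrapT => H2; apply: H; exists c => b Fb; apply: H2; exists b.
pose c n := sval (cid (F_not_surj n)).
have cP n b : F n b <> c n by rewrite /c; case: cid.
case E: (g' c) => [b m].
apply: (cP (e m) b); rewrite /F; case: pselect => [h|[]]; last by exists c, m.
case: cid => s /= [m' [E1 /ei em]].
by have -> : s = c by apply: g'i; rewrite E E1 em.
Qed.

Lemma lt_continuum_prod (B M : Type) :
  countable M -> lt_continuum B -> lt_continuum (B * M).
Proof.
move=> cM [[h hi] nB]; split; last exact: no_inj_Cantor_prod.
case: cM => e ei.
pose enc (n : nat) : Cantor := fun k => k == n.
have enci : injective enc.
  by move=> x y E; have := congr1 (fun f => f x) E; rewrite /enc eqxx => /esym/eqP.
pose interleave (x y : Cantor) : Cantor := fun k => if odd k then x k./2 else y k./2.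
exists (fun bm => interleave (h bm.1) (enc (e bm.2))) => [[b m] [b' m']] /= E.
have E1 : h b = h b'.
  apply: funext => k; have := congr1 (fun f => f k.*2.+1) E.
  by rewrite /interleave /= odd_double /= uphalf_double.
have E2 : enc (e m) = enc (e m').
  apply: funext => k; have := congr1 (fun f => f k.*2) E.
  by rewrite /interleave /= odd_double /= doubleK.
by rewrite (hi _ _ E1) (ei _ _ (enci _ _ E2)).
Qed.

Definition has_least (X : Type) (r : X -> X -> Prop) :=
  forall P : X -> Prop, (exists x, P x) -> exists z, P z /\ forall y, P y -> r z y.

Lemma exists_well_order (X : Type) :
  exists r : X -> X -> Prop, has_least r /\ forall x y, r x y -> r y x -> x = y.
Proof.
have [r wor] := well_ordering_principle {classic X}.
pose A (P : X -> Prop) := [pred y : {classic X} | `[< P y >]].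
have min_of P x : P x -> exists! z, minimum_of r (A P) z.
  by move=> Px; apply: wor; exists x; rewrite inE; apply/asboolP.
have least : has_least r.
  move=> P [x /min_of [z [[zP lb] _]]]; exists z; split; first by move: zP; rewrite inE => /asboolP.
  by move=> y Py; apply: lb; rewrite inE; apply/asboolP.
have rrefl x : r x x by have [z [-> H]] := least _ (ex_intro _ x erefl); exact: H.
exists r; split => // x y rxy ryx.
have [z [_ U]] := min_of (fun z => z = x \/ z = y) x (or_introl erefl).
have mx : minimum_of r (A (fun z => z = x \/ z = y)) x.
  split; first by rewrite inE; apply/asboolP; left.
  by move=> u; rewrite inE => /asboolP[]->.
have my : minimum_of r (A (fun z => z = x \/ z = y)) y.
  split; first by rewrite inE; apply/asboolP; right.
  by move=> u; rewrite inE => /asboolP[]->.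
by rewrite -(U _ mx) -(U _ my).
Qed.

Section CountableSegments.
Variables (X : Type) (r : X -> X -> Prop).
Hypotheses (r_least : has_least r) (r_anti : forall x y, r x y -> r y x -> x = y).

Lemma has_least_total x y : r x y \/ r y x.
Proof.
by have [z [[->|->] H]] := r_least (ex_intro (fun z => z = x \/ z = y) x (or_introl erefl));
  [left|right]; apply: H; [right|left].
Qed.

Definition countable_segment x := countable {v | r v x}.
Definition omega1 := {x : X | countable_segment x}.
Definition omega1_le (a b : omega1) := r (sval a) (sval b).

Lemma omega1_le_total a b : omega1_le a b \/ omega1_le b a.
Proof. exact: has_least_total. Qed.

Lemma omega1_segment_countable w : countable {v | omega1_le v w}.
Proof.
apply: (@countable_inj _ _ (fun v : {v | omega1_le v w} =>
  exist (fun u => r u (sval w)) (sval (sval v)) (svalP v))); last exact: (svalP w).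
by move=> u v [] /sval_inj /sval_inj.
Qed.

(* If [X] has points with uncountable segment, the least one has all its
   predecessors in [omega1], so its segment injects into [option omega1]. *)
Lemma omega1_uncountable : ~ countable X -> ~ countable omega1.
Proof.
move=> nX [e ei].
case: (pselect (exists x, ~ countable_segment x)) => [bad|allgood]; last first.
  apply: nX; exists (fun x => e (exist countable_segment x
    (match pselect (countable_segment x) with
     | left h => h | right h => False_ind _ (allgood (ex_intro _ x h)) end))).
  by move=> x y /ei [].
have [z [bz zmin]] := r_least bad; apply: bz.
pose code (v : {v | r v z}) := match pselect (countable_segment (sval v)) with
  | left h => (e (exist _ _ h)).+1 | right _ => 0%N end.
have vz (v : {v | r v z}) : ~ countable_segment (sval v) -> sval v = z.
  by move=> nv; apply: r_anti (svalP v) (zmin _ nv).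
exists code => u v; rewrite /code.
case: pselect => [hu|nu]; case: pselect => [hv|nv] //.
  by move=> [] /ei [] E; apply: sval_inj.
by move=> _; apply: sval_inj; rewrite (vz u nu) (vz v nv).
Qed.

Lemma omega1_lt_continuum : lt_continuum X -> lt_continuum omega1.
Proof.
case=> [[h hi] nC]; split.
  by exists (fun w : omega1 => h (sval w)) => u v /hi /sval_inj.
by move=> [g gi]; apply: nC; exists (fun c => sval (g c)) => u v /sval_inj /gi.
Qed.

Definition omega1_lt (a b : omega1) := omega1_le a b /\ a <> b.

Lemma omega1_lt_wf : well_founded omega1_lt.
Proof.
move=> w; apply: contrapT => nacc.
have bad : exists x, exists h : countable_segment x, ~ Acc omega1_lt (exist _ x h).
  by exists (sval w), (svalP w); rewrite (_ : exist _ _ _ = w) //; apply: sval_inj.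
have [z [[hz nz] zmin]] := r_least bad.
apply: nz; constructor => y [Ry neq]; apply: contrapT => ny; apply: neq.
apply: sval_inj; apply: (r_anti Ry); apply: zmin; exists (svalP y).
by rewrite (_ : exist _ _ _ = y) //; apply: sval_inj.
Qed.

(* Transfinite recursion: each point takes a value of [A] avoided by the
   countably many values taken below it. *)
Lemma omega1_inj (A : Type) : ~ countable A -> exists iota : omega1 -> A, injective iota.
Proof.
move=> nA; have [a0] := uncountable_inhabited nA.
pose pick (Pr : A -> Prop) := match pselect (exists a, Pr a) with
  | left h => sval (cid h) | right _ => a0 end.
have pickP Pr : (exists a, Pr a) -> Pr (pick Pr).
  by move=> ex; rewrite /pick; case: pselect => [h|/(_ ex)//]; case: (cid h).
pose F (w : omega1) (rec : forall v, omega1_lt v w -> A) :=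
  pick (fun a => forall v (h : omega1_lt v w), rec v h <> a).
pose iota := Fix omega1_lt_wf (fun _ => A) F.
have iota_eq w : iota w = pick (fun a => forall v (h : omega1_lt v w), iota v <> a).
  rewrite /iota Fix_eq // => x f g E; rewrite /F; congr pick; apply: funext => a.
  by apply: propext; split=> H v h; [rewrite -E | rewrite E]; apply: H.
have avoid w : exists a, forall v (h : omega1_lt v w), iota v <> a.
  apply: contrapT => H; apply: nA.
  have H' a : exists v, omega1_lt v w /\ iota v = a.
    by apply: contrapT => H2; apply: H; exists a => v h E; apply: H2; exists v.
  apply: (@countable_inj _ _ (fun a => exist (fun v => omega1_le v w)
    (sval (cid (H' a))) (proj1 (proj1 (svalP (cid (H' a))))))); last first.
    exact: omega1_segment_countable.
  move=> a b [] E; case: (cid (H' a)) E => va /= [_ <-].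
  by case: (cid (H' b)) => vb /= [_ <-] ->.
have iotaP w v : omega1_lt v w -> iota v <> iota w.
  by move=> h; have := pickP _ (avoid w); rewrite -iota_eq => /(_ v h).
exists iota => x y E; apply: contrapT => neq.
case: (omega1_le_total x y) => [Rxy|Ryx].
  exact: iotaP (conj Rxy neq) E.
by apply: iotaP (conj Ryx (fun e => neq (esym e))) (esym E).
Qed.

End CountableSegments.

Definition omega1_like (W : Type) (R : W -> W -> Prop) :=
  [/\ forall x y, R x y \/ R y x, forall w, countable {v | R v w} & ~ countable W].

Lemma omega1_like_unbounded (W : Type) (R : W -> W -> Prop) (S : W -> Prop) :
  omega1_like R -> countable {w | S w} -> ~ (forall w, exists v, S v /\ R w v).
Proof.
move=> [_ seg nW] cS unb; apply: nW.
pose f w := sval (cid (unb w)).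
have fR w : S (f w) /\ R w (f w) by rewrite /f; case: cid.
apply: (@countable_fibers _ _ (fun w => exist S (f w) (proj1 (fR w)))) => // s.
have H (u : {w | exist S (f w) (proj1 (fR w)) = s}) : R (sval u) (sval s).
  by case: u => [w /= <-]; exact: (proj2 (fR _)).
apply: (@countable_inj _ _ (fun u => exist (fun v => R v (sval s)) (sval u) (H u))).
  by move=> u v [] /sval_inj.
exact: seg.
Qed.

Lemma notCH_omega1_like (A : Type) : notCH -> ~ countable A ->
  exists (W : Type) (R : W -> W -> Prop) (iota : W -> A),
    [/\ omega1_like R, lt_continuum W & injective iota].
Proof.
move=> [X [nX ltX]] nA; have [r [rl ra]] := exists_well_order X.
have [iota ii] := omega1_inj rl ra nA.
exists (omega1 r), (@omega1_le _ r), iota; split => //.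
split; [exact: omega1_le_total | exact: omega1_segment_countable | exact: omega1_uncountable].
exact: omega1_lt_continuum.
Qed.

Lemma ccc_transfer (P Q : Type) (le : P -> P -> Prop) (le' : Q -> Q -> Prop)
    (phi : P -> Q) : injective phi ->
  (forall x y, compatible le' (phi x) (phi y) -> compatible le x y) ->
  po_ccc le' -> po_ccc le.
Proof.
move=> phii refl ccc' Anti Ap.
pose Anti' y := exists x, Anti x /\ phi x = y.
have cA' : countable {y | Anti' y}.
  apply: ccc' => y1 y2 [x1 [A1 <-]] [x2 [A2 <-]] neq cy.
  by apply: (Ap _ _ A1 A2); [move=> E; apply: neq; rewrite E | exact: refl].
apply: (@countable_inj _ _ (fun x : {x | Anti x} =>
  exist Anti' (phi (sval x)) (ex_intro _ (sval x) (conj (svalP x) erefl)))) => //.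
by move=> u v [] /phii /sval_inj.
Qed.

Section Precaliber.
Variables (P : Type) (le : P -> P -> Prop).
Hypotheses (le_po : is_partial_order le) (le_ccc : po_ccc le).

Lemma dense_countable_predense (D : P -> Prop) : dense le D ->
  exists M : P -> Prop, [/\ countable {x | M x}, forall x, M x -> D x &
    forall p, exists r, M r /\ compatible le r p].
Proof.
case: le_po => [lrefl [ltrans _]] Dd.
pose antichain_in_D (S : set P) := (forall x, S x -> D x) /\
  (forall x y, S x -> S y -> x <> y -> ~ compatible le x y).
have [M [[MD Manti] maxM]] : exists M, antichain_in_D M /\
    forall S, proper M S -> ~ antichain_in_D S.
  apply: Zorn_bigcup => F FA Ftot; split; first by move=> x [S /FA[SD _]]; apply: SD.
  move=> x y [S1 FS1 S1x] [S2 FS2 S2y].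
  case: (Ftot _ _ FS1 FS2) => [sub|sub].
    by apply: (proj2 (FA _ FS2)) => //; apply: sub.
  by apply: (proj2 (FA _ FS1)) => //; apply: sub.
exists M; split => //; first exact: le_ccc.
move=> p; have [r' [Dr' lr']] := Dd p; apply: contrapT => nocomp.
suff : ~ antichain_in_D (fun x => M x \/ x = r').
  apply; split; first by move=> x [/MD|->].
  move=> x y [Mx|->] [My|->] // neq [s [sx sy]].
  - by apply: (Manti _ _ Mx My neq); exists s.
  - by apply: nocomp; exists x; split => //; exists s; split => //; exact: ltrans sy lr'.
  - by apply: nocomp; exists y; split => //; exists s; split => //; exact: ltrans sx lr'.
apply: maxM; split; first by move=> x Mx; left.
move=> sub; apply: nocomp; exists r'; split; first exact: sub r' (or_intror erefl).
by exists r'; split => //; exact: lrefl.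
Qed.

(* Otherwise the conditions compatible with only countably many [c w] are
   dense, and a countable predense family of them would cover all of [W]. *)
Lemma uncountably_compatible_below (W : Type) (c : W -> P) : ~ countable W ->
  exists q, forall r, le r q -> ~ countable {w | compatible le r (c w)}.
Proof.
move=> nW; apply: contrapT => H.
have Dd : dense le (fun r => countable {w | compatible le r (c w)}).
  move=> q; apply: contrapT => H1; apply: H; exists q => r lrq cU.
  by apply: H1; exists r.
have [M [cM MD Mpre]] := dense_countable_predense Dd.
apply: nW; pose f w := sval (cid (Mpre (c w))).
have fP w : M (f w) /\ compatible le (f w) (c w) by rewrite /f; case: cid.
apply: (@countable_fibers _ _ (fun w => exist M (f w) (proj1 (fP w)))) => // r0.
have H0 (u : {w | exist M (f w) (proj1 (fP w)) = r0}) :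
    compatible le (sval r0) (c (sval u)).
  by case: u => [w /= <-]; exact: (proj2 (fP _)).
apply: (@countable_inj _ _
  (fun u => exist (fun w => compatible le (sval r0) (c w)) (sval u) (H0 u))).
  by move=> u v [] /sval_inj.
exact: MD _ (svalP r0).
Qed.

Definition below (q : P) := {r | le r q}.
Definition le_below q (x y : below q) := le (sval x) (sval y).

Lemma below_po q : is_partial_order (@le_below q).
Proof.
case: le_po => [lrefl [ltrans lanti]].
split; first by move=> x; apply: lrefl.
split; first by move=> x y z; apply: ltrans.
by move=> x y lxy lyx; apply: sval_inj; apply: lanti.
Qed.

Lemma below_ccc q : po_ccc (@le_below q).
Proof.
case: le_po => [_ [ltrans _]].
apply: (@ccc_transfer _ _ _ le (fun x : below q => sval x)) => //.
  by move=> x y /sval_inj.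
move=> x y [s [sx sy]].
by exists (exist _ s (ltrans _ _ _ sx (svalP x))); split.
Qed.

Hypothesis hMA : MA.

(* MA applied below a condition all of whose extensions meet uncountably many
   [c w], with one dense set per [w] asking to lie below some later [c v]. *)
Lemma precaliber_omega1 (W : Type) (R : W -> W -> Prop) (c : W -> P) :
  omega1_like R -> lt_continuum W ->
  exists S : W -> Prop, ~ countable {w | S w} /\
    forall v w, S v -> S w -> compatible le (c v) (c w).
Proof.
move=> oW ltW; have [Rtot seg nW] := oW.
case: le_po => [lrefl [ltrans _]].
have [q qP] := uncountably_compatible_below c nW.
pose D w (s : below q) := exists v, R w v /\ le (sval s) (c v).
have Dd w : dense (@le_below q) (D w).
  move=> s; have [v [Rwv [t [ts tc]]]] : exists v, R w v /\ compatible le (sval s) (c v).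
    apply: contrapT => H; apply: (qP _ (svalP s)).
    have Hu (u : {v | compatible le (sval s) (c v)}) : R (sval u) w.
      case: (Rtot (sval u) w) => // Rwu.
      by exfalso; apply: H; exists (sval u); split => //; exact: (svalP u).
    apply: (@countable_inj _ _ (fun u => exist (fun v => R v w) (sval u) (Hu u))).
      by move=> u v [] /sval_inj.
    exact: seg.
  by exists (exist _ t (ltrans _ _ _ ts (svalP s))); split => //; exists v.
have inh : inhabited (below q) by constructor; exists q; apply: lrefl.
have [G [[_ [_ Gdir]] Gmeet]] := hMA inh (@below_po q) (@below_ccc q) ltW Dd.
exists (fun v => exists s, G s /\ le (sval s) (c v)); split.
  move=> cS; apply: (omega1_like_unbounded oW cS) => w.
  by have [s [Gs [v [Rwv lv]]]] := Gmeet w; exists v; split => //; exists s.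
move=> v w [s1 [G1 l1]] [s2 [G2 l2]].
have [s3 [G3 [l31 l32]]] := Gdir _ _ G1 G2.
by exists (sval s3); split; [exact: ltrans l31 l1 | exact: ltrans l32 l2].
Qed.

End Precaliber.

Lemma precaliber (P : Type) (le : P -> P -> Prop) : MA -> notCH ->
  is_partial_order le -> po_ccc le ->
  forall (A : Type) (b : A -> P), ~ countable A ->
  exists A' : A -> Prop, ~ countable {x | A' x} /\
    forall x y, A' x -> A' y -> compatible le (b x) (b y).
Proof.
move=> hMA hCH po ccc A b nA.
have [W [R [iota [oW ltW ii]]]] := notCH_omega1_like hCH nA.
have [S [nS comp]] := precaliber_omega1 po ccc hMA (b \o iota) oW ltW.
exists (fun x => exists2 w, S w & iota w = x); split.
  move=> cA; apply: nS; apply: (@countable_inj _ _ (fun w : {w | S w} =>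
    exist (fun x => exists2 w, S w & iota w = x) (iota (sval w)) (ex_intro2 _ _ _ (svalP w) erefl))) => //.
  by move=> u v [] /ii /sval_inj.
by move=> x y [v Sv <-] [w Sw <-]; apply: comp.
Qed.

Definition le_prod (P P' : Type) (le : P -> P -> Prop) (le' : P' -> P' -> Prop)
  (x y : P * P') := le x.1 y.1 /\ le' x.2 y.2.

(* An uncountable antichain of the product would, by precaliber on the first
   factor, project onto an uncountable antichain of the second. *)
Lemma ccc_prod P P' (le : P -> P -> Prop) (le' : P' -> P' -> Prop) :
  MA -> notCH -> is_partial_order le -> po_ccc le ->
  (forall y, le' y y) -> po_ccc le' -> po_ccc (le_prod le le').
Proof.
move=> hMA hCH po ccc refl' ccc' Anti Ap; apply: contrapT => nA.
have [A' [nA' comp]] :=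
  precaliber hMA hCH po ccc (fun z : {z | Anti z} => (sval z).1) nA.
have key (u v : {z | Anti z}) : A' u -> A' v ->
    compatible le' (sval u).2 (sval v).2 -> u = v.
  move=> Au Av [t [tu tv]]; apply: contrapT => neq.
  have [s [su sv]] := comp _ _ Au Av.
  apply: (Ap _ _ (svalP u) (svalP v)); first by move=> E; apply: neq; apply: sval_inj.
  by exists (s, t); split; split.
pose A2 y := exists2 u : {z | Anti z}, A' u & (sval u).2 = y.
have cA2 : countable {y | A2 y}.
  apply: ccc' => y1 y2 [u Au <-] [v Av <-] neq cy.
  by apply: neq; rewrite (key _ _ Au Av cy).
apply: nA'; apply: (@countable_inj _ _ (fun u : {u | A' u} =>
  exist A2 (sval (sval u)).2 (ex_intro2 _ _ _ (svalP u) erefl))) => //.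
move=> u v [] E; apply: sval_inj; apply: key; [exact: svalP | exact: svalP |].
by rewrite E; exists (sval (sval v)).2; split; apply: refl'.
Qed.

Section BooleanPowers.
Variables (d : Order.disp_t) (B : ctbDistrLatticeType d).

Definition Bplus := {x : B | x != \bot}.
Definition le_Bplus (x y : Bplus) := sval x <= sval y.

Lemma compatible_BplusP (x y : Bplus) :
  compatible le_Bplus x y <-> sval x `&` sval y != \bot.
Proof.
split=> [[r [rx ry]]|h].
  apply: contra (svalP r) => /eqP E.
  have : sval r <= sval x `&` sval y by rewrite lexI; apply/andP.
  by rewrite E lex0.
by exists (exist (fun z : B => z != \bot) _ h); split; rewrite /le_Bplus /= ?leIl ?leIr.
Qed.

Lemma ccc_Bplus : ba_ccc B -> po_ccc le_Bplus.
Proof.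
move=> hB Anti Ap.
pose A0 x := exists h : x != \bot, Anti (exist _ x h).
have cA0 : countable {x | A0 x}.
  apply: hB; first by move=> x [].
  move=> x y [hx Ax] [hy Ay] neq; apply/eqP; apply: contraT => ne; exfalso.
  by apply: (Ap _ _ Ax Ay); [case=> E; apply: neq | exact/compatible_BplusP].
have toA0 (a : {a | Anti a}) : A0 (sval (sval a)).
  exists (svalP (sval a)).
  have -> : exist _ (sval (sval a)) (svalP (sval a)) = sval a by apply: sval_inj.
  exact: svalP a.
apply: (@countable_inj _ _ (fun a => exist A0 (sval (sval a)) (toA0 a))) => //.
by move=> u v [] /sval_inj /sval_inj.
Qed.

(* The [n]-th power of [Bplus], as sequences padded with [\top] after [n]. *)
Definition nonzero_upto n (f : nat -> B) :=
  forall i, if (i < n)%N then f i != \bot else f i == \top.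
Definition Bpow n := {f | nonzero_upto n f}.
Definition le_Bpow n (f g : Bpow n) := forall i, sval f i <= sval g i.

Lemma Bpow_po n : is_partial_order (@le_Bpow n).
Proof.
split; first by move=> x i; apply: le_refl.
split; first by move=> x y z lxy lyz i; apply: le_trans (lxy i) (lyz i).
move=> x y lxy lyx; apply: sval_inj; apply: funext => i.
by apply: le_anti; rewrite (lxy i) (lyx i).
Qed.

Lemma compatible_BpowP n (f g : Bpow n) : compatible (@le_Bpow n) f g <->
  forall i, (i < n)%N -> sval f i `&` sval g i != \bot.
Proof.
split=> [[r [rf rg]] i lin|H].
  have := svalP r i; rewrite lin; apply: contra => /eqP E.
  have : sval r i <= sval f i `&` sval g i by rewrite lexI rf rg.
  by rewrite E lex0.
have hp : nonzero_upto n (fun i => sval f i `&` sval g i).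
  move=> i; case: ifP => [/H //|ni].
  by move: (svalP f i) (svalP g i); rewrite ni => /eqP -> /eqP ->; rewrite meetxx.
by exists (exist _ _ hp); split => i; rewrite /= ?leIl ?leIr.
Qed.

Lemma nonzero_upto_restr n (f : Bpow n.+1) :
  nonzero_upto n (fun i => if (i < n)%N then sval f i else \top).
Proof.
move=> i; case: ifP => [lin|->] //.
by move: (svalP f i); rewrite (ltn_trans lin (ltnSn n)) lin.
Qed.

Lemma Bpow_last_nonzero n (f : Bpow n.+1) : sval f n != \bot.
Proof. by move: (svalP f n); rewrite ltnSn. Qed.

Definition Bpow_restr n (f : Bpow n.+1) : Bpow n :=
  exist (nonzero_upto n) _ (nonzero_upto_restr f).
Definition Bpow_last n (f : Bpow n.+1) : Bplus :=
  exist (fun x : B => x != \bot) _ (Bpow_last_nonzero f).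

(* [Bpow n.+1] embeds in [Bpow n * Bplus], reflecting compatibility. *)
Lemma ccc_Bpow : MA -> notCH -> ba_ccc B -> forall n, po_ccc (@le_Bpow n).
Proof.
move=> hMA hCH hB; elim=> [|n IH].
  move=> Anti _; exists (fun _ => 0%N) => x y _; apply: sval_inj; apply: sval_inj.
  by apply: funext => i; move: (svalP (sval x) i) (svalP (sval y) i) => /= /eqP -> /eqP ->.
apply: (@ccc_transfer _ _ _ (le_prod (@le_Bpow n) le_Bplus)
  (fun f => (Bpow_restr f, Bpow_last f))).
- move=> f g [] E1 E2; apply: sval_inj; apply: funext => i.
  case: (ltngtP i n) => [lin|gin|->] //.
    by have := congr1 (fun h => h i) E1; rewrite /= lin.
  have nf : (i < n.+1)%N = false by rewrite ltnS leqNgt gin.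
  by move: (svalP f i) (svalP g i); rewrite /= nf => /eqP -> /eqP ->.
- move=> f g [[r1 r2] [[l1 l2] [l1' l2']]]; apply/compatible_BpowP => i.
  rewrite ltnS leq_eqVlt => /orP[/eqP ->|lin].
    by apply/(compatible_BplusP (Bpow_last f) (Bpow_last g)); exists r2.
  have : compatible (@le_Bpow n) (Bpow_restr f) (Bpow_restr g) by exists r1.
  by move/compatible_BpowP/(_ i lin); rewrite /= lin.
- apply: ccc_prod => //; [exact: Bpow_po | by move=> y; apply: le_refl | exact: ccc_Bplus].
Qed.

End BooleanPowers.

(* Nodes of binary trees are pairs (level, code); the binary expansion of the
   code is a leading 1 followed by the path from the root, so the roots are
   the nodes [(L, 1)] and the nodes of level [n] have codes below [2 ^ n]. *)
Notation node := (nat * nat)%type.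
Definition ancestor (a w : node) : bool :=
  (a.1 <= w.1)%N && (w.2 %/ 2 ^ (w.1 - a.1) == a.2).
Definition in_tree (a : node) : bool := (0 < a.2)%N && (a.2 < 2 ^ a.1)%N.
Definition left_child (a : node) : node := (a.1.+1, a.2.*2).
Definition right_child (a : node) : node := (a.1.+1, a.2.*2.+1).

Lemma ancestor_refl w : ancestor w w.
Proof. by rewrite /ancestor leqnn subnn expn0 divn1 eqxx. Qed.

Lemma ancestor_level a w : ancestor a w -> (a.1 <= w.1)%N.
Proof. by case/andP. Qed.

Lemma ancestor_trans a b c : ancestor a b -> ancestor b c -> ancestor a c.
Proof.
case: a b c => [a1 a2] [b1 b2] [c1 c2].
rewrite /ancestor /= => /andP[ab /eqP Eb] /andP[bc /eqP Ec].
rewrite (leq_trans ab bc) /=.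
have -> : (c1 - a1 = (c1 - b1) + (b1 - a1))%N by lia.
by rewrite expnD divnMA Ec Eb.
Qed.

Lemma ancestor_total a b w : ancestor a w -> ancestor b w ->
  (a.1 <= b.1)%N -> ancestor a b.
Proof.
case: a b w => [a1 a2] [b1 b2] [w1 w2].
rewrite /ancestor /= => /andP[aw /eqP Ea] /andP[bw /eqP Eb] ab.
rewrite ab /= -Eb -divnMA -expnD.
have -> : ((w1 - b1) + (b1 - a1) = w1 - a1)%N by lia.
by rewrite Ea.
Qed.

Lemma ancestor_left a : ancestor a (left_child a).
Proof.
by rewrite /ancestor /left_child /= leqnSn subSnn expn1 -muln2 mulnK ?eqxx.
Qed.

Lemma ancestor_right a : ancestor a (right_child a).
Proof.
rewrite /ancestor /right_child /= leqnSn subSnn expn1 -addn1 -muln2 divnMDl //.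
by rewrite divn_small // addn0 eqxx.
Qed.

Lemma ancestor_left_right a w :
  ancestor (left_child a) w -> ancestor (right_child a) w -> False.
Proof.
by rewrite /ancestor /left_child /right_child /= => /andP[_ /eqP ->] /andP[_ /eqP] /n_Sn.
Qed.

Lemma in_tree_left a : in_tree a -> in_tree (left_child a).
Proof. by case: a => [a1 a2]; rewrite /in_tree /left_child /= expnS -muln2; lia. Qed.

Lemma in_tree_right a : in_tree a -> in_tree (right_child a).
Proof. by case: a => [a1 a2]; rewrite /in_tree /right_child /= expnS -muln2; lia. Qed.

Lemma in_tree_root L : (0 < L)%N -> in_tree (L, 1%N).
Proof. by move=> L0; rewrite /in_tree /= -{1}(expn0 2) ltn_exp2l. Qed.

Lemma not_ancestor_root z L : in_tree z -> (z.1 < L)%N -> ~~ ancestor z (L, 1%N).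
Proof.
case: z => [z1 z2]; rewrite /in_tree /ancestor /= => /andP[z2p _] zL.
rewrite divn_small; first by rewrite eq_sym (negbTE (lt0n_neq0 z2p)) andbF.
by rewrite -{1}(expn0 2) ltn_exp2l // subn_gt0.
Qed.

Definition descendant_at (n : nat) (a : node) : node := (n, a.2 * 2 ^ (n - a.1))%N.

Lemma ancestor_descendant_at a n : (a.1 <= n)%N -> ancestor a (descendant_at n a).
Proof. by move=> an; rewrite /ancestor /= an mulnK ?expn_gt0 ?eqxx. Qed.

Lemma descendant_at_lt a n : in_tree a -> (a.1 <= n)%N -> ((descendant_at n a).2 < 2 ^ n)%N.
Proof.
case/andP => _ h an; rewrite /= -{2}(subnKC an) expnD.
by rewrite ltn_pmul2r ?expn_gt0.
Qed.

Lemma pairwise_mem (T : eqType) (r : rel T) s x y : pairwise r s ->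
  x \in s -> y \in s -> x != y -> r x y || r y x.
Proof.
elim: s => // a s IH; rewrite pairwise_cons => /andP[ra ps].
rewrite !in_cons => /orP[/eqP ->|xs] /orP[/eqP ->|ys] nxy.
- by rewrite eqxx in nxy.
- by rewrite (allP ra y ys).
- by rewrite (allP ra x xs) orbT.
- exact: IH.
Qed.

Lemma all2_exl (S T : eqType) (r : S -> T -> bool) ys xs x : all2 r ys xs ->
  x \in xs -> exists2 y, y \in ys & r y x.
Proof.
elim: ys xs => [|y ys IH] [|x' xs] //= /andP[ryx a2].
rewrite in_cons => /orP[/eqP ->|xin]; first by exists y; rewrite ?mem_head.
by have [y' y'in r'] := IH _ a2 xin; exists y'; rewrite // in_cons y'in orbT.
Qed.

Lemma all2_exr (S T : eqType) (r : S -> T -> bool) ys xs y : all2 r ys xs ->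
  y \in ys -> exists2 x, x \in xs & r y x.
Proof.
elim: ys xs => [|y0 ys IH] [|x' xs] //= /andP[ryx a2].
rewrite in_cons => /orP[/eqP ->|yin]; first by exists x'; rewrite ?mem_head.
by have [x'' xin r'] := IH _ a2 yin; exists x''; rewrite // in_cons xin orbT.
Qed.

Lemma all2_mapl (S T : eqType) (r r' : S -> T -> bool) (f : S -> S) ys xs :
  all2 r ys xs -> (forall y x, y \in ys -> r y x -> r' (f y) x) ->
  all2 r' (map f ys) xs.
Proof.
elim: ys xs => [|y ys IH] [|x xs] //= /andP[ryx a2] H.
rewrite (H y x (mem_head _ _) ryx) /=; apply: IH => // y' x' yin.
by apply: H; rewrite in_cons yin orbT.
Qed.

Lemma all2_catr (S T : Type) (r : S -> T -> bool) ys s1 s2 :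
  all2 r ys (s1 ++ s2) ->
  exists ys1 ys2, [/\ ys = ys1 ++ ys2, all2 r ys1 s1 & all2 r ys2 s2].
Proof.
elim: s1 ys => [|x s1 IH] ys /=; first by move=> a2; exists [::], ys.
case: ys => [|y ys] //= /andP[ryx /IH [ys1 [ys2 [-> a1 a2]]]].
by exists (y :: ys1), ys2; split => //=; rewrite ryx.
Qed.

Section AtomlessRefinement.
Variables (d : Order.disp_t) (B : ctbDistrLatticeType d).
Implicit Types x y z w : B.

Lemma le_neq_bot x y : x <= y -> x != \bot -> y != \bot.
Proof. by move=> xy; apply: contra => /eqP E; rewrite -lex0 -E. Qed.

Lemma meet_joins_bot (s : seq B) x : (forall a, a \in s -> x `&` a = \bot) ->
  x `&` \join_(a <- s) a = \bot.
Proof.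
elim: s => [|a s IH] H; first by rewrite big_nil meetx0.
rewrite big_cons meetUr H ?mem_head // IH ?joinx0 // => b bs.
by apply: H; rewrite in_cons bs orbT.
Qed.

Hypothesis B_atomless : atomless B.

Lemma atomless_split z : z != \bot ->
  exists w, [/\ w != \bot, w <= z & z `\` w != \bot].
Proof.
move=> zn; have [w [wz wn wz']] : exists w, [/\ w <= z, w <> \bot & w <> z].
  apply: contrapT => H; case: (@B_atomless z); split => // w wz.
  case: (pselect (w = \bot)) => [->|nb]; first by left.
  case: (pselect (w = z)) => [->|nbz]; first by right.
  by exfalso; apply: H; exists w.
exists w; split => //; first exact/eqP.
by rewrite diff_eq0; apply/negP => zw; apply: wz'; apply: le_anti; rewrite wz zw.
Qed.

Lemma disjoint_refinement (xs : seq B) : all (fun x => x != \bot) xs ->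
  exists ys, all2 (fun y x => (y <= x) && (y != \bot)) ys xs /\
             pairwise (fun a b => a `&` b == \bot) ys.
Proof.
elim: xs => [|x xs IH]; first by exists [::].
rewrite /= => /andP[xn /IH [ys [a2 pw]]].
set J := \join_(y <- ys) y.
have leJ y : y \in ys -> y <= J by move=> yin; exact: joins_sup_seq.
have [xJ|xJ] := eqVneq (x `\` J) \bot; last first.
  exists (x `\` J :: ys); split; first by rewrite /= leBx xJ a2.
  rewrite pairwise_cons pw andbT; apply/allP => y /leJ yJ.
  by rewrite -lex0 (le_trans (leI2 (le_refl _) yJ)) // diffIK.
have [yj yjs xyj] : exists2 yj, yj \in ys & x `&` yj != \bot.
  apply: contrapT => H; move: xn; rewrite -(meet_idPl (_ : x <= J)); last by rewrite -diff_eq0 xJ.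
  rewrite meet_joins_bot ?eqxx // => a ain; apply/eqP; apply: contraT => ne.
  by exfalso; apply: H; exists a.
have [w [wn wxy yw]] := atomless_split xyj.
exists (w :: map (fun y => y `\` w) ys); split.
  rewrite /= wn (le_trans wxy (leIl _ _)) /=.
  apply: (all2_mapl a2) => y x' yin /andP[yx yn].
  rewrite (le_trans (leBx _ _) yx) /=.
  have [yw0|yw0] := eqVneq (y `&` w) \bot; first by rewrite disj_diffl ?yw0.
  suff -> : y = yj by apply: le_neq_bot yw; rewrite leBl // leIr.
  apply: contraTeq yw0 => nyj.
  move: (pairwise_mem pw yin yjs nyj); rewrite [yj `&` y]meetC orbb => /eqP E.
  by rewrite -lex0 -E leI2 // (le_trans wxy (leIr _ _)).
rewrite pairwise_cons; apply/andP; split.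
  by apply/allP => u /mapP[y _ ->]; rewrite diffKI.
rewrite pairwise_map; apply: sub_pairwise pw => a b /= /eqP ab.
by rewrite -lex0 -ab leI2 // leBx.
Qed.

Lemma disjoint_split (es fs : seq B) : all (fun x => x != \bot) (es ++ fs) ->
  exists b c, [/\ b `&` c = \bot,
     (forall e, e \in es -> b `&` e != \bot),
     (forall f, f \in fs -> c `&` f != \bot),
     b <= \join_(e <- es) e & c <= \join_(f <- fs) f].
Proof.
move=> /disjoint_refinement [ys [/all2_catr [ys1 [ys2 [-> a1 a2]]]]].
rewrite pairwise_cat => /and3P[ar _ _].
exists (\join_(y <- ys1) y), (\join_(y <- ys2) y); split.
- rewrite meetC; apply: meet_joins_bot => a ain; rewrite meetC.
  by apply: meet_joins_bot => b bin; apply/eqP; apply: (allrelP ar).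
- move=> e ein; have [y yin /andP[ye yn]] := all2_exl a1 ein.
  by apply: le_neq_bot yn; rewrite lexI joins_sup_seq.
- move=> e ein; have [y yin /andP[ye yn]] := all2_exl a2 ein.
  by apply: le_neq_bot yn; rewrite lexI joins_sup_seq.
- apply/joinsP_seq => y yin _; have [e ein /andP[ye _]] := all2_exr a1 yin.
  by apply: le_trans ye _; apply: joins_sup_seq.
- apply/joinsP_seq => y yin _; have [e ein /andP[ye _]] := all2_exr a2 yin.
  by apply: le_trans ye _; apply: joins_sup_seq.
Qed.

End AtomlessRefinement.

Section LabelledTrees.
Variables (d : Order.disp_t) (B : ctbDistrLatticeType d).
Local Notation label := (B * node)%type.
Implicit Types (p q : {fset label}) (b : B) (v w : node).

Definition branch_meet p w : B := \meet_(z <- p | ancestor z.2 w) z.1.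

Lemma branch_meetP p w x :
  x <= branch_meet p w <-> forall z, z \in p -> ancestor z.2 w -> x <= z.1.
Proof. by split => [/meetsP_seq|H]; [|apply/meetsP_seq]. Qed.

Lemma branch_meet_le p w z : z \in p -> ancestor z.2 w -> branch_meet p w <= z.1.
Proof. by move=> zp aw; apply: meets_inf_seq. Qed.

Lemma branch_meetU p q w : branch_meet (p `|` q)%fset w = branch_meet p w `&` branch_meet q w.
Proof.
apply: le_anti; apply/andP; split.
  by rewrite lexI; apply/andP; split; apply/branch_meetP => z zp az;
    apply: branch_meet_le => //; rewrite in_fsetU zp ?orbT.
apply/branch_meetP => z; rewrite in_fsetU => /orP[zp|zq] az.
  exact: le_trans (leIl _ _) (branch_meet_le zp az).
exact: le_trans (leIr _ _) (branch_meet_le zq az).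
Qed.

Lemma branch_meet1 b v w :
  branch_meet [fset (b, v)]%fset w = if ancestor v w then b else \top.
Proof.
by rewrite /branch_meet big_mkcond big_seq_fset1.
Qed.

(* Finitely many labels attached to tree nodes (a node may carry several),
   with nonzero meet along every labelled branch. *)
Definition consistent p := (forall z, z \in p -> in_tree z.2) /\
                           (forall z, z \in p -> branch_meet p z.2 != \bot).

(* The labelled ancestors of [w] form a chain; its deepest label is above the
   meet along the branch. *)
Lemma branch_meet_neq_bot p w : consistent p ->
  (exists2 z, z \in p & ancestor z.2 w) -> branch_meet p w != \bot.
Proof.
move=> [_ vp] ex.
have [z0 [z0p az0 zmax]] : exists z0, [/\ z0 \in p, ancestor z0.2 w &
    forall z, z \in p -> ancestor z.2 w -> (z.2.1 <= z0.2.1)%N].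
  pose Pk k := has (fun z : label => ancestor z.2 w && (z.2.1 == k)) p.
  have exk : exists k, Pk k.
    by case: ex => z zp aw; exists z.2.1; apply/hasP; exists z => //; rewrite aw eqxx.
  have bnd k : Pk k -> (k <= w.1)%N.
    by move=> /hasP[z _ /andP[/ancestor_level h /eqP <-]].
  case: (ex_maxnP exk bnd) => k /hasP[z0 z0p /andP[az0 /eqP e0]] kmax.
  exists z0; split => // z zp az.
  by rewrite e0; apply: kmax; apply/hasP; exists z => //; rewrite az eqxx.
apply: le_neq_bot (vp _ z0p); apply/branch_meetP => z zp azw.
by apply: branch_meet_le => //; apply: ancestor_total azw az0 (zmax _ zp azw).
Qed.

Lemma consistentU p q (K : {fset node}) : consistent p -> consistent q ->
  (forall z, z \in (p `|` q)%fset -> z.2 \in K) ->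
  (forall w, w \in K -> branch_meet p w `&` branch_meet q w != \bot) ->
  consistent (p `|` q)%fset.
Proof.
move=> [tp _] [tq _] inK H; split; last by move=> z /inK /H; rewrite branch_meetU.
by move=> z; rewrite in_fsetU => /orP[/tp|/tq].
Qed.

Lemma consistent_add p b v : consistent p -> in_tree v ->
  b `&` branch_meet p v != \bot ->
  (forall z, z \in p -> ancestor v z.2 -> b `&` branch_meet p z.2 != \bot) ->
  consistent (p `|` [fset (b, v)])%fset.
Proof.
move=> [tp vp] tv Hv Hp; split.
  by move=> z; rewrite !inE => /orP[/tp|/eqP ->].
move=> z; rewrite branch_meetU branch_meet1 !inE => /orP[zp|/eqP ->]; last first.
  by rewrite ancestor_refl meetC.
by case: ifP => [avz|_]; rewrite ?meetx1 ?vp // meetC Hp.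
Qed.

Lemma consistent_add_root p a : consistent p -> a != \bot ->
  exists v, consistent (p `|` [fset (a, v)])%fset.
Proof.
move=> cp an; set L := (\max_(z <- p) z.2.1).+1.
have zL z : z \in p -> (z.2.1 < L)%N by move=> zp; rewrite ltnS; apply: leq_bigmax_seq.
have top : a <= branch_meet p (L, 1%N).
  apply/branch_meetP => z zp az.
  by move: (not_ancestor_root (cp.1 _ zp) (zL _ zp)); rewrite az.
exists (L, 1%N); apply: consistent_add => //; first exact: in_tree_root.
  by rewrite (meet_idPl top).
by move=> z zp /ancestor_level /=; rewrite leqNgt zL.
Qed.

Definition condition := {p : {fset label} | consistent p}.
Definition le_cond (x y : condition) := (sval y `<=` sval x)%fset.

Lemma cond_po : is_partial_order le_cond.
Proof.
split; first by move=> x; apply: fsubset_refl.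
split; first by move=> x y z lxy lyz; apply: fsubset_trans lyz lxy.
move=> x y lxy lyx; apply: sval_inj; apply/eqP; rewrite eqEfsubset.
by apply/andP; split.
Qed.

Lemma compatible_cond (x y : condition) :
  consistent (sval x `|` sval y)%fset -> compatible le_cond x y.
Proof.
move=> h; exists (exist _ _ h).
by split; rewrite /le_cond /=; [exact: fsubsetUl | exact: fsubsetUr].
Qed.

(* Conditions with the same set [K] of labelled nodes are compatible as soon
   as their branch meets at the nodes of [K] are pairwise meeting, so each
   such fibre embeds into a finite power of [Bplus]. *)
Lemma ccc_cond : MA -> notCH -> ba_ccc B -> po_ccc le_cond.
Proof.
move=> hMA hCH hB Anti Ap.
pose nodes (u : {x | Anti x}) := [fset z.2 | z in sval (sval u)]%fset.
apply: (@countable_fibers _ {fset node} nodes).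
  by exists (@choice.pickle _); apply: (pcan_inj (@choice.pickleK_inv _)).
move=> K; pose ks := enum_fset K; pose N := size ks.
pose U := {u | nodes u = K}; pose lab (u : U) := sval (sval (sval u)).
have nodesK (u : U) : nodes (sval u) = K := svalP u.
have cons (u : U) : consistent (lab u) := svalP (sval (sval u)).
have inK (u : U) z : z \in lab u -> z.2 \in K.
  by move=> zp; rewrite -(nodesK u); apply/imfsetP; exists z.
have meet_at (u : U) i : (i < N)%N -> branch_meet (lab u) (nth (0, 0)%N ks i) != \bot.
  move=> iN; have : nth (0, 0)%N ks i \in K by exact: mem_nth.
  rewrite -(nodesK u) => /imfsetP[z zp ->]; exact: (cons u).2.
pose tup (u : U) (i : nat) := if (i < N)%N then branch_meet (lab u) (nth (0, 0)%N ks i) else \top.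
have tupP (u : U) : nonzero_upto N (tup u).
  by move=> i; rewrite /tup; case: ltnP => iN //; apply: meet_at.
pose tupN (u : U) : Bpow B N := exist _ (tup u) (tupP u).
have comp (u v : U) : compatible (@le_Bpow _ _ N) (tupN u) (tupN v) ->
    compatible le_cond (sval (sval u)) (sval (sval v)).
  move/compatible_BpowP => H; apply: compatible_cond.
  apply: (consistentU (cons u) (cons v) (K := K)).
    by move=> z; rewrite in_fsetU => /orP[/inK|/inK].
  move=> w wK; have iN : (index w ks < N)%N by rewrite index_mem.
  by have := H _ iN; rewrite /= /tup iN nth_index.
pose A2 y := exists u : U, tupN u = y.
have cA2 : countable {y | A2 y}.
  apply: (ccc_Bpow hMA hCH hB) => y1 y2 [u <-] [v <-] neq /comp cuv.
  apply: (Ap _ _ (svalP (sval u)) (svalP (sval v))) => // E; apply: neq.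
  by have -> : u = v by apply: sval_inj; apply: sval_inj.
apply: (@countable_inj _ _ (fun u : U => exist A2 (tupN u) (ex_intro _ u erefl))) => //.
move=> u v [] E; apply: contrapT => neq.
apply: (Ap _ _ (svalP (sval u)) (svalP (sval v))).
  by move=> E2; apply: neq; apply: sval_inj; apply: sval_inj.
apply: comp; have -> : tupN u = tupN v by apply: sval_inj.
by exists (tupN v); split => i; exact: le_refl.
Qed.

Lemma branch_meet_addE p b v w :
  branch_meet (p `|` [fset (b, v)])%fset w =
  if ancestor v w then branch_meet p w `&` b else branch_meet p w.
Proof. by rewrite branch_meetU branch_meet1; case: ifP; rewrite ?meetx1. Qed.

Hypothesis B_atomless : atomless B.

(* Split the meets along all labelled branches through the left and the
   right child of [v] by two disjoint elements below [a]. *)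
Lemma consistent_split p a v : consistent p -> (a, v) \in p ->
  exists b c, [/\ consistent (p `|` [fset (b, left_child v)] `|` [fset (c, right_child v)])%fset,
                  b `&` c = \bot & b `|` c <= a].
Proof.
move=> cp avp; have tv : in_tree v := cp.1 _ avp.
pose below_child u := branch_meet p u :: [seq branch_meet p z.2 | z <- p & ancestor u z.2].
have below_childP u x : x \in below_child u -> x = branch_meet p u \/
    exists2 z, z \in p & ancestor u z.2 /\ x = branch_meet p z.2.
  rewrite in_cons => /orP[/eqP ->|/mapP[z]]; first by left.
  by rewrite mem_filter => /andP[az zp] ->; right; exists z.
have child_le u : ancestor v u -> \join_(x <- below_child u) x <= a.
  move=> avu; apply/joinsP_seq => x /below_childP[->|[z zp [az ->]]] _.
    exact: branch_meet_le avp avu.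
  exact: branch_meet_le avp (ancestor_trans avu az).
have nz : all (fun x => x != \bot) (below_child (left_child v) ++ below_child (right_child v)).
  apply/allP => x; rewrite mem_cat => /orP[] /below_childP[->|[z zp [_ ->]]];
    rewrite ?(cp.2 _ zp) //; apply: branch_meet_neq_bot => //; exists (a, v) => //;
    [exact: ancestor_left | exact: ancestor_right].
have [b [c [bc bN cN bJ cJ]]] := disjoint_split B_atomless nz.
exists b, c; split => //; last first.
  by rewrite leUx (le_trans bJ (child_le _ (ancestor_left _))) (le_trans cJ (child_le _ (ancestor_right _))).
apply: consistent_add.
- apply: consistent_add => //; first exact: in_tree_left.
    by apply: bN; rewrite mem_head.
  move=> z zp az; apply: bN; rewrite in_cons; apply/orP; right.
  by apply/mapP; exists z; rewrite ?mem_filter ?az.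
- exact: in_tree_right.
- rewrite branch_meet_addE; case: ifP => [/ancestor_left_right/(_ (ancestor_refl _))//|_].
  by apply: cN; rewrite mem_head.
move=> z; rewrite !inE => /orP[zp|/eqP ->] az; last first.
  by case: (ancestor_left_right (ancestor_refl _) az).
rewrite branch_meet_addE; case: ifP => [/ancestor_left_right/(_ az)//|_].
apply: cN; rewrite in_cons; apply/orP; right.
by apply/mapP; exists z; rewrite ?mem_filter ?az.
Qed.

End LabelledTrees.

Lemma filter_lower_bound (P : Type) (le : P -> P -> Prop) (G : P -> Prop) :
  (forall p q r, le p q -> le q r -> le p r) -> is_filter le G ->
  forall m (f : 'I_m -> P), (forall i, G (f i)) ->
  exists r, G r /\ forall i, le r (f i).
Proof.
move=> ltrans [[x0 Gx0] [_ Gdir]]; elim=> [|m IH] f Gf; first by exists x0; split => // -[].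
have [r1 [Gr1 H1]] := IH (fun i => f (widen_ord (leqnSn m) i)) (fun i => Gf _).
have [r [Gr [l1 l2]]] := Gdir _ _ Gr1 (Gf ord_max).
exists r; split => // i; case: (unliftP ord_max i) => [j ->|->] //.
have -> : lift ord_max j = widen_ord (leqnSn m) j.
  by apply: val_inj; rewrite /= /bump leqNgt ltn_ord add0n.
exact: ltrans l1 (H1 j).
Qed.

Lemma pigeonhole_fibre m K (c : 'I_m -> 'I_K) : (0 < K)%N ->
  exists v : 'I_K, (m <= K * #|[set i | c i == v]|)%N.
Proof.
move=> K0; pose fibre v := #|[set i | c i == v]|.
have [v _ vmax] := @arg_maxnP _ (Ordinal K0) xpredT fibre isT.
have total : (\sum_(u < K) fibre u)%N = m.
  rewrite -[RHS]card_ord -sum1_card (partition_big c xpredT) //=.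
  by apply: eq_bigr => u _; rewrite /fibre cardsE -sum1_card; apply: eq_bigl.
exists v; apply: (@leq_trans (\sum_(u < K) fibre u)); first by rewrite total.
have -> : (K * fibre v = \sum_(u < K) fibre v)%N by rewrite sum_nat_const card_ord.
by apply: leq_sum => u _; apply: vmax.
Qed.

Section GenericLabelling.
Variables (d : Order.disp_t) (B : ctbDistrLatticeType d).
Local Notation label := (B * node)%type.
Local Notation condition := (condition B).
Local Notation le_cond := (@le_cond _ B).

(* The second disjunct lets a condition avoid splitting [i] by never
   containing it, which makes these sets dense. *)
Definition split_dense (i : label) (x : condition) :=
  (i.1 != \bot -> exists v, (i.1, v) \in sval x) /\
  ((exists b c, [/\ (b, left_child i.2) \in sval x, (c, right_child i.2) \in sval x,
                    b `&` c = \bot & b `|` c <= i.1]) \/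
   (forall y, le_cond y x -> i \notin sval y)).

Lemma split_dense_dense : atomless B -> forall i, dense le_cond (split_dense i).
Proof.
move=> hA [a v] x.
have [x1 [lx1 Hx1]] : exists x1, le_cond x1 x /\ (a != \bot -> exists v', (a, v') \in sval x1).
  have [-> | an] := eqVneq a \bot; first by exists x; split; [apply: fsubset_refl|].
  have [v' cons'] := consistent_add_root (svalP x) an.
  exists (exist _ _ cons'); split; first exact: fsubsetUl.
  by move=> _; exists v'; rewrite /= in_fsetU in_fset1 eqxx orbT.
case: (pselect (exists y, le_cond y x1 /\ (a, v) \in sval y)) => [[y [ly iny]]|none].
  have [b [c [cons2 bc bca]]] := consistent_split hA (svalP y) iny.
  exists (exist _ _ cons2); split; last first.
    rewrite /le_cond /= -fsetUA; apply: fsubset_trans (fsubsetUl _ _).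
    exact: fsubset_trans lx1 ly.
  split; first by move=> /Hx1 [v' m']; exists v'; rewrite /= !in_fsetU (fsubsetP ly _ m').
  by left; exists b, c; split => //=; rewrite !inE eqxx ?orbT.
exists x1; split => //; split => //; right => y ly; apply/negP => iny; apply: none.
by exists y.
Qed.

Definition generic_level (G : condition -> Prop) n (x : B) :=
  exists y, G y /\ exists v, (x, v) \in sval y /\ (v.1 <= n)%N.

(* Given [m] elements of level [n], a common lower bound in [G] labels them
   at nodes of level at most [n]; by pigeonhole, [m / 2 ^ n] of these lie
   above a common node of level [n], where the branch meet is nonzero. *)
Lemma generic_level_int_witness G n : is_filter le_cond G ->
  int_witness (generic_level G n) ((2%:R : rat) ^- n)%R.
Proof.
move=> Gf; split; first by rewrite invr_ge0 exprn_ge0 // ler0n.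
move=> m s m0 Hs.
pose y i := sval (cid (Hs i)).
have yP i : G (y i) /\ exists v, (s i, v) \in sval (y i) /\ (v.1 <= n)%N.
  by rewrite /y; case: cid.
pose v i := sval (cid (proj2 (yP i))).
have vP i : (s i, v i) \in sval (y i) /\ ((v i).1 <= n)%N by rewrite /v; case: cid.
have [r [Gr lr]] := filter_lower_bound (proj1 (proj2 (@cond_po _ B))) Gf (fun i => proj1 (yP i)).
have inr i : (s i, v i) \in sval r by apply: (fsubsetP (lr i)); exact: (proj1 (vP i)).
pose code i : 'I_(2 ^ n) :=
  Ordinal (descendant_at_lt ((svalP r).1 _ (inr i)) (proj2 (vP i))).
have [u hu] := pigeonhole_fibre code (expn_gt0 2 n).
exists [set i | code i == u]; split.
  by rewrite ler_pdivrMl ?exprn_gt0 ?ltr0Sn // -natrX -natrM ler_nat.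
have [i0 i0in] : exists i0, i0 \in [set i | code i == u].
  apply/card_gt0P; rewrite lt0n; apply: contraTneq hu => ->.
  by rewrite muln0 -ltnNge.
have anc i : i \in [set i | code i == u] -> ancestor (v i) (n, val u).
  by rewrite inE => /eqP <-; exact: ancestor_descendant_at (proj2 (vP i)).
apply: le_neq_bot (branch_meet_neq_bot (svalP r) _); last first.
  by exists (s i0, v i0); [exact: inr | exact: anc].
by apply/meetsP => i iI; apply: branch_meet_le (inr i) (anc i iI).
Qed.

End GenericLabelling.

Definition int_decomposition d (B : ctbDistrLatticeType d) (Bn : nat -> B -> Prop) :=
  [/\ forall x : B, x != \bot <-> exists n, Bn n x,
      forall n x, Bn n x -> Bn n.+1 x,
      forall n, int_ge (Bn n) ((2%:R : rat) ^- n)%R &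
      forall n a, Bn n a ->
        exists b c : B, Bn n.+1 b /\ Bn n.+1 c /\ b `&` c = \bot /\ b `|` c <= a].

(* Meet the [split_dense] sets, fewer than continuum many, by a filter of
   the ccc poset of conditions, and read off the levels. *)
Lemma ccc_int_decomposition d (B : ctbDistrLatticeType d) : MA -> notCH ->
  atomless B -> ba_ccc B -> lt_continuum B ->
  exists Bn : nat -> B -> Prop, int_decomposition Bn.
Proof.
move=> hMA hCH hA hB ltB.
have inh : inhabited (condition B).
  by constructor; exists fset0; split => z; rewrite in_fset0.
have ltI : lt_continuum (B * node).
  apply: lt_continuum_prod ltB.
  by exists (@choice.pickle _); apply: (pcan_inj (@choice.pickleK_inv _)).
have [G [Gf Gmeet]] := hMA _ _ inh (@cond_po _ B) (ccc_cond hMA hCH hB) _ _ ltI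
  (split_dense_dense hA).
have [_ [_ Gdir]] := Gf.
exists (generic_level G); split.
- move=> x; split.
    move=> xn; have [y [Gy [/(_ xn) [v xv] _]]] := Gmeet (x, (0, 0)%N).
    by exists v.1, y; split => //; exists v.
  move=> [n [y [Gy [v [xv _]]]]].
  exact: le_neq_bot (branch_meet_le xv (ancestor_refl v)) ((svalP y).2 _ xv).
- move=> n x [y [Gy [v [xv l]]]]; exists y; split => //; exists v; split => //.
  exact: leqW.
- move=> n b bn; exists ((2%:R : rat) ^- n)%R; split => //.
  exact: generic_level_int_witness.
- move=> n a [y [Gy [v [av l]]]].
  have [y' [Gy' [_ [[b [c [bl cr bc bca]]]|no]]]] := Gmeet (a, v).
    by exists b, c; split; [|split]; [exists y'; split => //; exists (left_child v)
                                    |exists y'; split => //; exists (right_child v)|].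
  have [s [Gs [ls1 ls2]]] := Gdir _ _ Gy Gy'.
  by have := no s ls2; rewrite (fsubsetP ls1 _ av).
Qed.

(* A witness [c > 2 ^ - n.+1] of the intersection number finds sets of size
   [c m] with nonzero meet, which in a disjoint family have size at most 1. *)
Lemma disjoint_family_bound d (B : ctbDistrLatticeType d) (F : B -> Prop) n m
    (s : 'I_m -> B) : int_ge F ((2%:R : rat) ^- n)%R -> injective s ->
  (forall i, F (s i)) -> (forall i j, i != j -> s i `&` s j = \bot) ->
  (m <= 2 ^ n.+1)%N.
Proof.
move=> hF si Fs disj; case: (posnP m) => [->|m0] //.
have blt : (((2%:R : rat) ^+ n.+1)^-1 < (2%:R : rat) ^- n)%R.
  by rewrite ltf_pV2 ?posrE ?exprn_gt0 ?ltr0Sn // exprS ltr_pMl ?exprn_gt0 ?ltr0Sn.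
have [c [bc [c0 wit]]] := hF _ blt.
have [I [cI nI]] := wit m s m0 Fs.
have I1 : (#|I| <= 1)%N.
  rewrite leqNgt; apply/negP => /card_gt1P [i [j [iI jI ij]]].
  have : \meet_(k in I) s k <= s i `&` s j by rewrite lexI !meets_inf.
  by rewrite disj // lex0 (negbTE nI).
have : (((2%:R : rat) ^+ n.+1)^-1 * m%:R <= 1)%R.
  apply: le_trans (le_trans cI _); last by rewrite -(mulr1n 1) ler_nat.
  by apply: ler_wpM2r; [exact: ler0n | exact: ltW].
by rewrite ler_pdivrMl ?exprn_gt0 ?ltr0Sn // mulr1 -natrX ler_nat.
Qed.

Lemma int_decomposition_ccc d (B : ctbDistrLatticeType d) (Bn : nat -> B -> Prop) :
  (forall x : B, x != \bot <-> exists n, Bn n x) ->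
  (forall n, int_ge (Bn n) ((2%:R : rat) ^- n)%R) -> ba_ccc B.
Proof.
move=> cover hint A Anz Adisj.
pose f (u : {x | A x}) := sval (cid ((cover (sval u)).1 (Anz _ (svalP u)))).
have fP u : Bn (f u) (sval u) by rewrite /f; case: cid.
apply: (@countable_fibers _ nat f); first by exists id.
move=> n; apply: (@countable_bounded_injections _ (2 ^ n.+1)) => m s si.
apply: (disjoint_family_bound (s := fun i => sval (sval (s i))) (hint n)).
- by move=> i j /sval_inj /sval_inj /si.
- by move=> i; case: (s i) => u /= <-; apply: fP.
- move=> i j ij; apply: Adisj; [exact: svalP (sval (s i)) | exact: svalP (sval (s j)) |].
  by move=> /sval_inj /sval_inj /si E; move: ij; rewrite E eqxx.
Qed.

Theorem theorem4p3 :
  MA -> notCH ->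
  forall (d : Order.disp_t) (B : ctbDistrLatticeType d),
    atomless B -> lt_continuum B ->
    (ba_ccc B <->
     exists Bn : nat -> B -> Prop,
       (forall x : B, x != \bot <-> exists n, Bn n x) /\
       (forall n x, Bn n x -> Bn n.+1 x) /\
       (forall n, int_ge (Bn n) ((2%:R : rat) ^- n)%R) /\
       (forall n a, Bn n a ->
          exists b c : B, Bn n.+1 b /\ Bn n.+1 c /\ b `&` c = \bot /\ b `|` c <= a)).
Proof.
move=> hMA hCH d B hA ltB; split.
  by move=> hB; have [Bn [? ? ? ?]] := ccc_int_decomposition hMA hCH hA hB ltB; exists Bn.
by move=> [Bn [cover [_ [hint _]]]]; apply: int_decomposition_ccc cover hint.
Qed.
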